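(* Let $X\subseteq Y$ with $|X|\le|Y\setminus X|$. Then the map $\pi:S_\infty(Y)\to(I(X),\tau_{pp})$, $\pi(f)=\widehat f$, is continuous, onto and open, where $S_\infty(Y)$ carries the topology of pointwise convergence (the product topology inherited from $Y^Y$, $Y$ discrete).
   Context: $S_\infty(Y)$ is the group of all bijections $Y\to Y$. $I(X)$ is the set of all bijections $f:A\to B$ with $A,B\subseteq X$ (including the empty map), $\mathrm{dom}(f)=A$, $\mathrm{im}(f)=B$. For $f\in S_\infty(Y)$, $\widehat f=\{(x,f(x)): x\in X,\ f(x)\in X\}$, the restriction of $f$ to $X\cap f^{-1}(X)$. For $x,y\in X$: $v(x,y)=\{f\in I(X): x\in\mathrm{dom}(f), f(x)=y\}$, $w_1(x)=\{f: x\notin\mathrm{dom}(f)\}$, $w_2(y)=\{f: y\notin\mathrm{im}(f)\}$; $\tau_{pp}$ is the topology on $I(X)$ generated by the subbasis of all these sets. *)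

From HB Require Import structures.
From mathcomp Require Import all_boot.
From mathcomp Require Import boolp classical_sets functions cardinality.
From Stdlib Require Import List.
Set Implicit Arguments. Unset Strict Implicit. Unset Printing Implicit Defensive.
Local Open Scope classical_set_scope.

(* Topology on a carrier C : set T generated by a subbasis S : set (set T)
   (the subspace-style topology on C whose open sets are unions of finite
   intersections of members of S, intersected with C).
   The empty intersection is C itself. *)
Definition sb_open {T : Type} (C : set T) (S : set (set T)) (U : set T) : Prop :=
  U `<=` C /\
  forall t, U t ->
    exists l : list (set T),
      Forall (fun B => S B /\ B t) l /\
      forall s, C s -> Forall (fun B => B s) l -> U s.

Definition Sinf (Y : Type) : set (Y -> Y) := [set f | bijective f].

(* Subbasis of the topology of pointwise convergence on Y^Y (Y discrete):
   the sets { f | f y = z }. *)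
Definition pw_subbasis (Y : Type) : set (set (Y -> Y)) :=
  [set B | exists y z : Y, B = [set f | f y = z]].

(* I(X): partial bijections f : A -> B with A, B subsets of X, represented
   by their graph (a set of pairs) which is functional and injective. *)
Definition IX (Y : Type) (X : set Y) : set (set (Y * Y)) :=
  [set g | (forall p, g p -> X p.1 /\ X p.2) /\
           (forall x y y', g (x, y) -> g (x, y') -> y = y') /\
           (forall x x' y, g (x, y) -> g (x', y) -> x = x')].

Definition v_set (Y : Type) (x y : Y) : set (set (Y * Y)) := [set g | g (x, y)].
Definition w1_set (Y : Type) (x : Y) : set (set (Y * Y)) :=
  [set g | forall y, ~ g (x, y)].
Definition w2_set (Y : Type) (y : Y) : set (set (Y * Y)) :=
  [set g | forall x, ~ g (x, y)].

Definition pp_subbasis (Y : Type) (X : set Y) : set (set (set (Y * Y))) :=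
  [set B | (exists x y, X x /\ X y /\ B = v_set x y) \/
           (exists x, X x /\ B = w1_set x) \/
           (exists y, X y /\ B = w2_set y)].

Definition hat (Y : Type) (X : set Y) (f : Y -> Y) : set (Y * Y) :=
  [set p | X p.1 /\ X p.2 /\ f p.1 = p.2].

From mathcomp Require Import all_boot.
From mathcomp Require Import boolp classical_sets functions cardinality.
From Stdlib Require Import List.
Set Implicit Arguments. Unset Strict Implicit. Unset Printing Implicit Defensive.
Local Open Scope classical_set_scope.

(* Both topologies are given by subbases, so everything is phrased with
   basic neighbourhoods (finite lists of subbasic sets); [basic_conj] lets us
   intersect finitely many such neighbourhoods.
   - Continuity: each subbasic set v(x,y), w1(x), w2(y) containing hat t is
     forced by a single pointwise condition on bijections near t.
   - Onto: an injection h : X -> Y \ X lets us extend any g in I(X) to a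
     bijection of Y ([extension]): points of X outside dom g go to h x, points
     h b with b outside im g go back to b, h b with b = g a goes to h a.
   - Open: a pointwise neighbourhood of f prescribes f on a finite list P.
     A tau_pp-neighbourhood of hat f forces every g in it to agree with
     hat f in the row of p and the column of f p, for p in P ([agrees_at]).
     If X is finite, taking all of X for P forces g = hat f. Otherwise the
     injection h can be chosen to leave infinitely many points of Y \ X
     untouched ([spare_embedding]); starting from the extension of g, we then
     fix the values at the points of P one at a time by composing with
     3-cycles through such spare points, without changing hat ([correct_along]). *)

Definition basic {T : Type} (S : set (set T)) (t : T) (l : list (set T)) : Prop :=
  Forall (fun B => S B /\ B t) l.

Definition in_all {T : Type} (l : list (set T)) (s : T) : Prop :=
  Forall (fun B => B s) l.

Lemma basic1 {T : Type} (C : set T) (S : set (set T)) (t : T) (B : set T)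
    (Q : T -> Prop) :
  S B -> B t -> (forall s, C s -> B s -> Q s) ->
  exists l, basic S t l /\ forall s, C s -> in_all l s -> Q s.
Proof.
move=> SB Bt BQ; exists [:: B]; split; first by constructor.
by move=> s Cs sB; apply: BQ => //; exact: Forall_inv sB.
Qed.

Lemma basic_conj {T I : Type} (C : set T) (S : set (set T)) (t : T)
    (Q : I -> T -> Prop) (P : list I) :
  (forall p, In p P -> exists l, basic S t l /\ forall s, C s -> in_all l s -> Q p s) ->
  exists l, basic S t l /\ forall s, C s -> in_all l s -> forall p, In p P -> Q p s.
Proof.
elim: P => [|p P IH] QP; first by exists nil; split => // s _ _ p [].
have [lp [bp Hp]] := QP p (or_introl erefl).
have [l [bl Hl]] := IH (fun q Pq => QP q (or_intror Pq)).
exists (lp ++ l); split; first exact/Forall_app.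
by move=> s Cs /Forall_app[sp sl] q [<-|Pq]; [apply: Hp | apply: Hl].
Qed.

Lemma sb_continuous {A B : Type} (CA : set A) (SA : set (set A))
    (CB : set B) (SB : set (set B)) (phi : A -> B) :
  (forall a, CA a -> CB (phi a)) ->
  (forall a V, CA a -> SB V -> V (phi a) ->
     exists l, basic SA a l /\ forall s, CA s -> in_all l s -> V (phi s)) ->
  forall V, sb_open CB SB V -> sb_open CA SA [set a | CA a /\ V (phi a)].
Proof.
move=> phiC phiS V [_ Vo]; split=> [a [] //|a [CAa Va]].
have [lV [blV lVV]] := Vo _ Va.
have [l [bl lQ]] := @basic_conj _ _ CA SA a (fun W s => W (phi s)) lV
  (fun W WlV => let: conj SW Wa := (proj1 (Forall_forall _ _) blV) W WlV in
                phiS a W CAa SW Wa).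
exists l; split => // s CAs sl; split => //.
by apply: lVV; [exact: phiC | apply/Forall_forall; exact: lQ].
Qed.

Lemma hat_IX (Y : Type) (X : set Y) (f : Y -> Y) : Sinf f -> IX X (hat X f).
Proof.
move=> bf; split; [|split].
- by move=> [a b] [? []].
- by move=> x y y' [_ [_ /= <-]] [_ [_ /= <-]].
- by move=> x x' y [_ [_ /= fx]] [_ [_ /= fx']]; apply: (bij_inj bf); rewrite fx fx'.
Qed.

(* Each subbasic set of tau_pp containing hat t is forced by one pointwise
   condition: v(x,y) by s x = y, w1(x) by s x = t x, w2(y) by s (t^-1 y) = y. *)
Lemma hat_pullback (Y : Type) (X : set Y) (t : Y -> Y) (V : set (set (Y * Y))) :
  Sinf t -> pp_subbasis X V -> V (hat X t) ->
  exists l, basic (@pw_subbasis Y) t l /\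
    forall s, Sinf s -> in_all l s -> V (hat X s).
Proof.
move=> [ti tK Kt] [[x [y [Xx [Xy ->]]]]|[[x [Xx ->]]|[y [Xy ->]]]] Vt.
- apply: (basic1 (B := [set s | s x = y])); first by exists x, y.
    by case: Vt => _ [].
  by move=> s _ sxy; split.
- apply: (basic1 (B := [set s | s x = t x])); first by exists x, (t x).
    by [].
  by move=> s _ sx y [_ [Xy' /= sxy]]; apply: (Vt y); split => //; split => //=; rewrite -sx.
- apply: (basic1 (B := [set s | s (ti y) = y])); first by exists (ti y), y.
    by rewrite /= Kt.
  move=> s bs sy x [Xx' [_ /= sxy]].
  have xy : x = ti y by apply: (bij_inj bs); rewrite sxy sy.
  by apply: (Vt x); split => //; split => //=; rewrite xy Kt.
Qed.

Lemma hat_continuous (Y : Type) (X : set Y) (V : set (set (Y * Y))) :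
  sb_open (IX X) (pp_subbasis X) V ->
  sb_open (@Sinf Y) (@pw_subbasis Y) [set f | Sinf f /\ V (hat X f)].
Proof. by apply: sb_continuous => [f /hat_IX|f W bf]; last exact: hat_pullback. Qed.

Lemma pw_support (Y : Type) (f : Y -> Y) (l : list (set (Y -> Y))) :
  basic (@pw_subbasis Y) f l ->
  exists P : list Y, forall s, (forall q, In q P -> s q = f q) -> in_all l s.
Proof.
elim: l => [|B l IH] bl; first by exists nil => s _; constructor.
have [[y [z ->]] fyz] := Forall_inv bl.
have [P HP] := IH (Forall_inv_tail bl).
exists (y :: P) => s sP; constructor; first by rewrite /= sP //; left.
by apply: HP => q Pq; apply: sP; right.
Qed.

Definition agrees_at (Y : Type) (X : set Y) (f : Y -> Y) (g : set (Y * Y))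
    (p : Y) : Prop :=
  (forall y, g (p, y) <-> hat X f (p, y)) /\
  (forall x, g (x, f p) <-> hat X f (x, f p)).

(* Agreement at p is forced on I(X) by a basic tau_pp-neighbourhood of hat f:
   v(p, f p), w1(p) or w2(f p) according to which of p, f p lie in X. *)
Lemma agrees_nbhd (Y : Type) (X : set Y) (f : Y -> Y) (p : Y) : Sinf f ->
  exists l, basic (pp_subbasis X) (hat X f) l /\
    forall g, IX X g -> in_all l g -> agrees_at X f g p.
Proof.
move=> bf; have [Xp|Xp] := pselect (X p); have [Xfp|Xfp] := pselect (X (f p)).
- apply: (basic1 (B := v_set p (f p))); first by left; exists p, (f p).
    by [].
  move=> g [_ [gfun ginj]] gpf; split=> [y|x]; split.
  + by move=> gpy; rewrite -(gfun _ _ _ gpf gpy).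
  + by case=> _ [_ /= <-].
  + by move=> gxf; rewrite (ginj _ _ _ gxf gpf).
  + by case=> _ [_ /= /(bij_inj bf) ->].
- apply: (basic1 (B := w1_set p)); first by right; left; exists p.
    by move=> y [_ [Xy /= fpy]]; apply: Xfp; rewrite fpy.
  move=> g [gX _] gp; split=> [y|x]; split.
  + by move/gp.
  + by case=> _ [Xy /= fpy]; case: Xfp; rewrite fpy.
  + by case/gX.
  + by case=> _ [].
- apply: (basic1 (B := w2_set (f p))); first by right; right; exists (f p).
    by move=> x [Xx [_ /= /(bij_inj bf) xp]]; apply: Xp; rewrite -xp.
  move=> g [gX _] gf; split=> [y|x]; split.
  + by case/gX.
  + by case.
  + by move/gf.
  + by case=> Xx [_ /= /(bij_inj bf) xp]; case: Xp; rewrite -xp.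
- exists nil; split=> // g [gX _] _; split=> [y|x]; split.
  + by case/gX.
  + by case.
  + by case/gX.
  + by case=> _ [].
Qed.

Lemma agrees_everywhere (Y : Type) (X : set Y) (f : Y -> Y) (g : set (Y * Y)) :
  IX X g -> (forall x, X x -> agrees_at X f g x) -> g = hat X f.
Proof.
move=> [gX _] ag; apply/seteqP; split=> -[a b] gab.
- by have [Xa _] := gX _ gab; apply/(ag a Xa).1.
- by have [Xa _] := gab; apply/(ag a Xa).1.
Qed.

Definition transpose (Y : Type) (g : set (Y * Y)) : set (Y * Y) :=
  [set p | g (p.2, p.1)].

Lemma transposeK (Y : Type) (g : set (Y * Y)) : transpose (transpose g) = g.
Proof. by apply/seteqP; split=> -[]. Qed.

Lemma IX_transpose (Y : Type) (X : set Y) (g : set (Y * Y)) :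
  IX X g -> IX X (transpose g).
Proof.
move=> [gX [gfun ginj]]; split; [|split].
- by move=> [a b] /gX [].
- by move=> x y y'; apply: ginj.
- by move=> x x' y; apply: gfun.
Qed.

(* Extension of a partial bijection g of X to a bijection of Y, given an
   injection h of X into its complement. [ext_rel g] is the graph of the
   extension; it is total, functional and transposes to [ext_rel (transpose g)],
   so its choice function is a bijection with inverse the extension of the
   transpose. *)
Section Extension.
Variables (Y : Type) (X : set Y) (h : Y -> Y).
Hypothesis h_out : forall x, X x -> ~ X (h x).
Hypothesis h_inj : forall x x', X x -> X x' -> h x = h x' -> x = x'.

Definition ext_rel (g : set (Y * Y)) (y z : Y) : Prop :=
  [\/ X y /\ (g (y, z) \/ (forall z', ~ g (y, z')) /\ z = h y),
      exists2 b, X b /\ y = h b &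
        (exists a, g (a, b) /\ z = h a) \/ (forall a, ~ g (a, b)) /\ z = b
    | [/\ ~ X y, forall b, X b -> y <> h b & z = y]].

Lemma ext_rel_total (g : set (Y * Y)) (y : Y) : exists z, ext_rel g y z.
Proof.
have [Xy|nXy] := pselect (X y).
  have [[z gyz]|ng] := pselect (exists z, g (y, z)).
    by exists z; apply: Or31; split => //; left.
  by exists (h y); apply: Or31; split => //; right; split => // z gyz; apply: ng; exists z.
have [[b [Xb ->]]|nh] := pselect (exists b, X b /\ y = h b).
  have [[a gab]|ng] := pselect (exists a, g (a, b)).
    by exists (h a); apply: Or32; exists b => //; left; exists a.
  by exists b; apply: Or32; exists b => //; right; split => // a gab; apply: ng; exists a.
by exists y; apply: Or33; split => // b Xb yb; apply: nh; exists b.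
Qed.

Lemma ext_rel_transpose (g : set (Y * Y)) (y z : Y) :
  IX X g -> ext_rel g y z -> ext_rel (transpose g) z y.
Proof.
move=> [gX _] [[Xy [gyz|[ng ->]]]|[b [Xb ->] [[a [gab ->]]|[ng ->]]]|[nXy nh ->]].
- by apply: Or31; split; [exact: (gX _ gyz).2 | left].
- by apply: Or32; exists y => //; right; split => // a; apply: ng.
- apply: Or32; exists a; first by split => //; exact: (gX _ gab).1.
  by left; exists b.
- by apply: Or31; split => //; right; split => // a; apply: ng.
- by apply: Or33.
Qed.

Lemma ext_rel_onX (g : set (Y * Y)) (y z : Y) : X y -> ext_rel g y z ->
  g (y, z) \/ (forall z', ~ g (y, z')) /\ z = h y.
Proof.
by move=> Xy [[]|[b [Xb yb] _]|[]] //; case: (h_out Xb); rewrite -yb.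
Qed.

Lemma ext_rel_onh (g : set (Y * Y)) (b z : Y) : X b -> ext_rel g (h b) z ->
  (exists a, g (a, b) /\ z = h a) \/ (forall a, ~ g (a, b)) /\ z = b.
Proof.
move=> Xb [[/(h_out Xb)]|[b' [Xb' bb'] b'z]|[_ /(_ b Xb)]] //.
by rewrite (h_inj Xb Xb' bb').
Qed.

Lemma ext_rel_fun (g : set (Y * Y)) (y z z' : Y) :
  IX X g -> ext_rel g y z -> ext_rel g y z' -> z = z'.
Proof.
move=> [_ [gfun ginj]] yz yz'.
have [Xy|nXy] := pselect (X y).
  case: (ext_rel_onX Xy yz) (ext_rel_onX Xy yz') => [gyz|[ng ->]] [gyz'|[ng' ->]] //.
  - exact: gfun gyz gyz'.
  - by case: (ng' _ gyz).
  - by case: (ng _ gyz').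
have [[b [Xb yb]]|nh] := pselect (exists b, X b /\ y = h b).
  rewrite yb in yz yz'.
  case: (ext_rel_onh Xb yz) (ext_rel_onh Xb yz') => [[a [gab ->]]|[ng ->]] [[a' [gab' ->]]|[ng' ->]] //.
  - by rewrite (ginj _ _ _ gab gab').
  - by case: (ng' _ gab).
  - by case: (ng _ gab').
case: yz yz' => [[]|[b [Xb yb] _]|[_ _ ->]] //; first by case: nh; exists b.
by case=> [[]|[b [Xb yb] _]|[_ _ ->]] //; case: nh; exists b.
Qed.

Definition extension (g : set (Y * Y)) (y : Y) : Y :=
  proj1_sig (cid (ext_rel_total g y)).

Lemma extensionP (g : set (Y * Y)) (y : Y) : ext_rel g y (extension g y).
Proof. exact: proj2_sig (cid (ext_rel_total g y)). Qed.

Lemma extension_eq (g : set (Y * Y)) (y z : Y) :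
  IX X g -> ext_rel g y z -> extension g y = z.
Proof. by move=> Ig; apply: ext_rel_fun Ig (extensionP g y). Qed.

Lemma extension_bij (g : set (Y * Y)) : IX X g -> Sinf (extension g).
Proof.
move=> Ig; have IgT := IX_transpose Ig.
exists (extension (transpose g)) => y.
  exact/(extension_eq IgT)/ext_rel_transpose/extensionP.
apply: (extension_eq Ig); rewrite -[g in ext_rel g]transposeK.
exact/ext_rel_transpose/extensionP.
Qed.

(* Inside X x X the extension adds nothing to g, since h leaves X. *)
Lemma hat_extension (g : set (Y * Y)) : IX X g -> hat X (extension g) = g.
Proof.
move=> Ig; apply/seteqP; split=> -[a b] /=.
  move=> [/= Xa [/= Xb /= eab]]; subst b.
  case: (ext_rel_onX Xa (extensionP g a)) => [//|[_ eha]].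
  by case: (h_out Xa); rewrite -eha.
move=> gab; have [Xa Xb] := Ig.1 _ gab.
by split=> //; split=> //; apply: (extension_eq Ig); apply: Or31; split => //; left.
Qed.

Lemma extension_fix (g : set (Y * Y)) (y : Y) : IX X g ->
  ~ X y -> (forall b, X b -> y <> h b) -> extension g y = y.
Proof. by move=> Ig nXy nh; apply: (extension_eq Ig); apply: Or33. Qed.
End Extension.

Lemma hat_ext (Y : Type) (X : set Y) (f1 f2 : Y -> Y) :
  (forall a, X a -> f1 a <> f2 a -> ~ X (f1 a) /\ ~ X (f2 a)) ->
  hat X f1 = hat X f2.
Proof.
move=> f12; apply/seteqP; split=> -[a b] [/= Xa [/= Xb /= fab]];
  split=> //; split=> //=; have [e|ne] := pselect (f1 a = f2 a).
- by rewrite -e.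
- by case: (f12 a Xa ne) => nX1 _; rewrite fab in nX1.
- by rewrite e.
- by case: (f12 a Xa ne) => _ nX2; rewrite fab in nX2.
Qed.

(* The 3-cycle p -> t -> w -> p, identity elsewhere; composing with it lets
   us change a bijection at one point while disturbing only two others. *)
Definition cycle3 (Y : Type) (p t w y : Y) : Y :=
  if pselect (y = p) then t else if pselect (y = t) then w
  else if pselect (y = w) then p else y.

Lemma cycle3_p (Y : Type) (p t w : Y) : cycle3 p t w p = t.
Proof. by rewrite /cycle3; case: pselect. Qed.

Lemma cycle3_t (Y : Type) (p t w : Y) : t <> p -> cycle3 p t w t = w.
Proof. by move=> tp; rewrite /cycle3; do 2?case: pselect. Qed.

Lemma cycle3_id (Y : Type) (p t w y : Y) :
  y <> p -> y <> t -> y <> w -> cycle3 p t w y = y.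
Proof. by move=> *; rewrite /cycle3; do 3?case: pselect. Qed.

Lemma cycle3_bij (Y : Type) (p t w : Y) :
  t <> p -> w <> p -> w <> t -> bijective (cycle3 p t w).
Proof.
move=> tp wp wt; exists (cycle3 p w t) => y; rewrite /cycle3;
by repeat (case: pselect => [?|?]; subst => //=).
Qed.

(* [roomy X f]: outside any finite list there is w with w and f w outside X;
   such w can serve as the third point of a correcting 3-cycle. *)
Definition roomy (Y : Type) (X : set Y) (f : Y -> Y) : Prop :=
  forall L : list Y, exists w, [/\ ~ X w, ~ X (f w) & ~ In w L].

Section Correction.
Variables (Y : Type) (X : set Y) (f : Y -> Y) (g : set (Y * Y)).
Hypothesis f_bij : Sinf f.

Definition realizes (f' : Y -> Y) : Prop :=
  [/\ Sinf f', hat X f' = g & roomy X f'].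

Lemma disagreement_outside (f' : Y -> Y) (p t : Y) :
  hat X f' = g -> agrees_at X f g p -> f' p <> f p -> f' t = f p ->
  [/\ X p -> ~ X (f p), X p -> ~ X (f' p) & X t -> ~ X (f p)].
Proof.
move=> f'g [row col] differ f't; rewrite -f'g in row col; split.
- move=> Xp Xfp; apply: differ.
  by case: ((row (f p)).2 (conj Xp (conj Xfp erefl))) => _ [].
- move=> Xp Xf'p; apply: differ.
  by case: ((row (f' p)).1 (conj Xp (conj Xf'p erefl))) => _ [].
- move=> Xt Xfp; have tp : t = p.
    apply: (bij_inj f_bij).
    by case: ((col t).1 (conj Xt (conj Xfp f't))) => _ [].
  by apply: differ; rewrite -{1}tp.
Qed.

(* One correction: with t := f'^-1 (f p) and a spare point w, the map
   f' \o (p t w) sends p to f p, keeps hat (agreement at p rules out any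
   X x X pair at p or t), and is unchanged on points already correct. *)
Lemma correct_at (f' : Y -> Y) (p : Y) (L : list Y) :
  realizes f' -> agrees_at X f g p ->
  exists f'', [/\ realizes f'', f'' p = f p &
                  forall q, In q L -> f' q = f q -> f'' q = f q].
Proof.
move=> [f'_bij f'g f'room] agp.
have [same|differ] := pselect (f' p = f p).
  by exists f'; split => // q _ ->.
have [f'i _ Kf'] := f'_bij.
pose t := f'i (f p); have f't : f' t = f p by rewrite /t Kf'.
have tp : t <> p by move=> tp; apply: differ; rewrite -{1}tp.
have [w [nXw nXf'w wptL]] := f'room [:: p, t & L].
have wp : w <> p by move=> wp; apply: wptL; left.
have wt : w <> t by move=> wt; apply: wptL; right; left.
have [Xp_fp Xp_f'p Xt_fp] := disagreement_outside f'g agp differ f't.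
exists (f' \o cycle3 p t w); split.
- split.
  + exact/bij_comp/cycle3_bij.
  + rewrite -f'g; apply: hat_ext => a Xa /= ne.
    have [ap|ap] := pselect (a = p).
      by subst a; rewrite cycle3_p // f't; split; [exact: Xp_fp | exact: Xp_f'p].
    have [a_t|a_t] := pselect (a = t).
      by subst a; rewrite cycle3_t // f't; split; [|exact: Xt_fp].
    have [aw|aw] := pselect (a = w); first by subst a.
    by case: ne; rewrite cycle3_id.
  + move=> L'; have [w' [nXw' nXf'w' w'L]] := f'room [:: p, t, w & L'].
    exists w'; split=> //=; last by move=> w'L'; apply: w'L; do 3 right.
    by rewrite cycle3_id // => e; apply: w'L; rewrite e /=; auto.
- by rewrite /= cycle3_p.
- move=> q qL f'q /=.
  have qp : q <> p by move=> qp; apply: differ; rewrite -qp.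
  have qt : q <> t by move=> qt; apply: qp; apply: (bij_inj f_bij); rewrite -f't -qt.
  have qw : q <> w by move=> qw; apply: wptL; rewrite -qw; right; right.
  by rewrite cycle3_id.
Qed.

Lemma correct_along (f0 : Y -> Y) (L : list Y) :
  realizes f0 -> (forall p, In p L -> agrees_at X f g p) ->
  exists f', realizes f' /\ forall q, In q L -> f' q = f q.
Proof.
move=> rf0; elim: L => [|p L IH] agL; first by exists f0.
have [f' [rf' f'L]] := IH (fun q qL => agL q (or_intror qL)).
have [f'' [rf'' f''p f''L]] := correct_at L rf' (agL p (or_introl erefl)).
exists f''; split=> // q [<-|qL]; first exact: f''p.
by apply: f''L => //; apply: f'L.
Qed.
End Correction.

Lemma list_or_seq (Y : Type) (X : set Y) :
  (exists l : list Y, forall x, X x -> In x l) \/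
  (exists s : nat -> Y, (forall n, X (s n)) /\ injective s).
Proof.
have [cover|nocover] := pselect (exists l : list Y, forall x, X x -> In x l).
  by left.
right; have fresh (l : list Y) : exists x, X x /\ ~ In x l.
  apply: contrapT => nx; apply: nocover; exists l => x Xx.
  by apply: contrapT => nxl; apply: nx; exists x.
pose next l := proj1_sig (cid (fresh l)).
have nextP l : X (next l) /\ ~ In (next l) l := proj2_sig (cid (fresh l)).
pose prefix := fix prefix n := if n is m.+1 then next (prefix m) :: prefix m else nil.
exists (fun n => next (prefix n)); split=> [n|]; first exact: (nextP _).1.
have earlier m n : (m < n)%N -> In (next (prefix m)) (prefix n).
  elim: n => [//|n IH]; rewrite ltnS leq_eqVlt => /orP[/eqP->|/IH]; first by left.
  by right.
move=> m n eq_mn; case: (ltngtP m n) => // lt.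
- by case: (nextP (prefix n)) => _ []; rewrite -eq_mn; apply: earlier.
- by case: (nextP (prefix m)) => _ []; rewrite eq_mn; apply: earlier.
Qed.

Lemma escape_list (Y : Type) (r : nat -> Y) : injective r ->
  forall L : list Y, exists n, ~ In (r n) L.
Proof.
move=> r_inj L.
suff [N HN] : exists N, forall m, (N <= m)%N -> ~ In (r m) L by exists N; apply: HN.
elim: L => [|a L [N HN]]; first by exists 0 => m _ [].
have [[k rk]|nk] := pselect (exists k, r k = a).
- exists (maxn N k.+1) => m; rewrite geq_max => /andP[Nm km] [rma|rmL].
    by move: km; rewrite -rk in rma; rewrite (r_inj _ _ rma) ltnn.
  exact: HN m Nm rmL.
- by exists N => m Nm [rma|rmL]; [apply: nk; exists m | exact: HN m Nm rmL].
Qed.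

Lemma hilbert_hotel (Y : Type) (X : set Y) (s : nat -> Y) :
  (forall n, X (s n)) -> injective s ->
  exists sigma : Y -> Y, [/\ forall x, X x -> X (sigma x), injective sigma &
    forall n x, sigma x <> s n.*2.+1].
Proof.
move=> Xs s_inj.
pose sigma x := if pselect (exists n, s n = x) is left e
                then s (proj1_sig (cid e)).*2 else x.
have sigma_s n : sigma (s n) = s n.*2.
  rewrite /sigma; case: pselect => [e|[]]; last by exists n.
  by rewrite (s_inj _ _ (proj2_sig (cid e))).
have sigma_id x : ~ (exists n, s n = x) -> sigma x = x.
  by move=> nx; rewrite /sigma; case: pselect.
have odd_even a n : s a.*2 <> s n.*2.+1.
  by move=> /s_inj/(congr1 odd); rewrite /= !odd_double.
exists sigma; split.
- move=> x Xx; have [[n <-]|nx] := pselect (exists n, s n = x).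
    by rewrite sigma_s.
  by rewrite sigma_id.
- move=> x x'.
  have [[a <-]|nx] := pselect (exists n, s n = x);
  have [[b <-]|nx'] := pselect (exists n, s n = x');
  rewrite ?sigma_s ?sigma_id //.
  + by move=> /s_inj/double_inj ->.
  + by move=> e; case: nx'; exists a.*2.
  + by move=> e; case: nx; exists b.*2.
- move=> n x; have [[a <-]|nx] := pselect (exists n, s n = x).
    by rewrite sigma_s; apply: odd_even.
  by rewrite sigma_id // => e; apply: nx; exists n.*2.+1.
Qed.

Lemma card_embedding (Y : Type) (X : set Y) : (X #<= ~` X)%card ->
  exists h : Y -> Y, (forall x, X x -> ~ X (h x)) /\
    (forall x x', X x -> X x' -> h x = h x' -> x = x').
Proof.
move=> /card_leP[k].
pose h x := if pselect (X x) is left Xx then val (k (exist _ x (mem_set Xx))) else x.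
exists h; split=> [x Xx|x x' Xx Xx'].
  by rewrite /h; case: pselect => // Xx'; case: (k _) => /= z; rewrite inE.
rewrite /h; case: pselect => // Xx1; case: pselect => // Xx1'.
move=> /val_inj/(@inj _ _ _ k) kxx'.
by have [] := kxx' (in_setT _) (in_setT _).
Qed.

(* For infinite X, the injection can leave infinitely many points of the
   complement outside its image: compose with the Hilbert hotel shift. *)
Lemma spare_embedding (Y : Type) (X : set Y) (s : nat -> Y) :
  (X #<= ~` X)%card -> (forall n, X (s n)) -> injective s ->
  exists h : Y -> Y, [/\ forall x, X x -> ~ X (h x),
    forall x x', X x -> X x' -> h x = h x' -> x = x' &
    forall L : list Y, exists w, [/\ ~ X w, forall b, X b -> w <> h b & ~ In w L]].
Proof.
move=> HX Xs s_inj.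
have [h0 [h0_out h0_inj]] := card_embedding HX.
have [sigma [sigmaX sigma_inj sigma_odd]] := hilbert_hotel Xs s_inj.
exists (h0 \o sigma); split=> /=.
- by move=> x /sigmaX/h0_out.
- by move=> x x' Xx Xx' /(h0_inj _ _ (sigmaX _ Xx) (sigmaX _ Xx'))/sigma_inj.
- move=> L; have r_inj : injective (fun n => h0 (s n.*2.+1)).
    by move=> m n /(h0_inj _ _ (Xs _) (Xs _))/s_inj [/double_inj].
  have [n nL] := escape_list r_inj L.
  exists (h0 (s n.*2.+1)); split=> // [|b Xb].
    exact: h0_out.
  by move=> /(h0_inj _ _ (Xs _) (sigmaX _ Xb)) e; apply: (sigma_odd n b).
Qed.

Lemma realize_near (Y : Type) (X : set Y) (f : Y -> Y) (P : list Y) :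
  (X #<= ~` X)%card -> Sinf f ->
  exists P' : list Y, forall g, IX X g ->
    (forall p, In p P' -> agrees_at X f g p) ->
    exists f', [/\ Sinf f', hat X f' = g & forall q, In q P -> f' q = f q].
Proof.
move=> HX f_bij; case: (list_or_seq X) => [[lX lXX]|[s [Xs s_inj]]].
  exists lX => g Ig ag; exists f; split=> //.
  by rewrite (agrees_everywhere Ig (fun x Xx => ag x (lXX x Xx))).
have [h [h_out h_inj h_spare]] := spare_embedding HX Xs s_inj.
exists P => g Ig agP.
have base : realizes X g (extension X h g).
  split; [exact: extension_bij | exact: hat_extension |].
  move=> L; have [w [nXw nhw wL]] := h_spare L.
  by exists w; rewrite extension_fix.
have [f' [[f'_bij f'g _] f'P]] := correct_along f_bij base agP.
by exists f'.
Qed.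

Lemma hat_open (Y : Type) (X : set Y) (U : set (Y -> Y)) :
  (X #<= ~` X)%card -> sb_open (@Sinf Y) (@pw_subbasis Y) U ->
  sb_open (IX X) (pp_subbasis X) [set hat X f | f in U].
Proof.
move=> HX [UI Uo]; split; first by move=> _ [f /UI f_bij <-]; apply: hat_IX.
move=> _ [f Uf <-]; have f_bij := UI _ Uf.
have [l [bl lU]] := Uo _ Uf.
have [P Pl] := pw_support bl.
have [P' HP'] := realize_near P HX f_bij.
have [lpp [blpp lppP']] := @basic_conj _ _ (IX X) (pp_subbasis X) (hat X f)
  (fun p g => agrees_at X f g p) P' (fun p _ => @agrees_nbhd _ X f p f_bij).
exists lpp; split=> // g Ig glpp.
have [f' [f'_bij <- f'P]] := HP' g Ig (lppP' g Ig glpp).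
by exists f' => //; apply: lU f'_bij (Pl f' f'P).
Qed.

Theorem proposition6p2 (Y : Type) (X : set Y) :
  (X #<= ~` X)%card ->
  (* pi maps S_infty(Y) into I(X) *)
  (forall f, @Sinf Y f -> IX X (hat X f)) /\
  (* continuity *)
  (forall V, sb_open (IX X) (pp_subbasis X) V ->
     sb_open (@Sinf Y) (@pw_subbasis Y) [set f | @Sinf Y f /\ V (hat X f)]) /\
  (* onto *)
  (forall g, IX X g -> exists f, @Sinf Y f /\ hat X f = g) /\
  (* open *)
  (forall U, sb_open (@Sinf Y) (@pw_subbasis Y) U ->
     sb_open (IX X) (pp_subbasis X) [set hat X f | f in U]).
Proof.
move=> HX; split; first exact: hat_IX.
split; first exact: hat_continuous.
split; last by move=> U; apply: hat_open.
move=> g Ig; have [h [h_out h_inj]] := card_embedding HX.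
by exists (extension X h g); split; [apply: extension_bij | apply: hat_extension].
Qed.
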